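(* There is a regular language $L$ such that ${\rm pssr}(L)$ is not regular; for instance $L=0^+10^+$, for which ${\rm pssr}(L)\cap 0^+110^+=\{0^n110^n : n\ge 2\}$.
   Context: For words $x=a_1\cdots a_n$, $y=b_1\cdots b_n$ of the same length, the perfect shuffle is $x\,\text{sh}\,y=a_1b_1a_2b_2\cdots a_nb_n$. $x^R$ denotes the reversal of $x$. For a language $L$, ${\rm pssr}(L)=\{x\,\text{sh}\,x^R : x\in L\}$. *)

From mathcomp Require Import all_boot.
Set Implicit Arguments. Unset Strict Implicit. Unset Printing Implicit Defensive.

Definition language (A : Type) := seq A -> Prop.

Record dfa (A : finType) := DFA {
  dfa_state : finType;
  dfa_start : dfa_state;
  dfa_final : pred dfa_state;
  dfa_trans : dfa_state -> A -> dfa_state }.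

Definition dfa_accept (A : finType) (M : dfa A) (w : seq A) : bool :=
  @dfa_final A M (foldl (@dfa_trans A M) (@dfa_start A M) w).

Definition regular (A : finType) (L : language A) : Prop :=
  exists M : dfa A, forall w, L w <-> dfa_accept M w.

(* Perfect shuffle of two words (intended for words of equal length). *)
Fixpoint shuffle (T : Type) (x y : seq T) : seq T :=
  match x, y with
  | a :: x', b :: y' => a :: b :: shuffle x' y'
  | _, _ => [::]
  end.

Definition pssr (A : Type) (L : language A) : language A :=
  fun w => exists x, L x /\ w = shuffle x (rev x).

(* Binary alphabet: 0 = false, 1 = true. *)
Definition L0 : language bool :=
  fun w => exists m n, 0 < m /\ 0 < n /\ w = nseq m false ++ true :: nseq n false.

Definition L011 : language bool :=
  fun w => exists m n, 0 < m /\ 0 < n /\ w = nseq m false ++ true :: true :: nseq n false.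

(* The perfect shuffle of x with its reversal is always a palindrome of length
   2|x|. A word 0^p 1 1 0^q of pssr(L0) is therefore of the form 0^n 1 1 0^n, and
   comparing lengths with x = 0^a 1 0^b gives n = a + b >= 2. Conversely
   0^n 1 1 0^n is the shuffle of x = 0^(k+e) 1 0^k with n = 2k + e, e in {0, 1}.

   Non-regularity follows from the fooling-set (Myhill-Nerode) argument: with
   u_i = 0^(i+2) and v_j = 110^(j+2), u_i v_j lies in pssr(L0) iff i = j, while a
   DFA cannot separate the prefixes u_i by pigeonhole. Regularity of L0 is
   witnessed by a five-state automaton, presented as a transition table on nat. *)

From mathcomp Require Import all_boot zify.

Set Implicit Arguments.
Unset Strict Implicit.
Unset Printing Implicit Defensive.

Section Shuffle.
Variable T : Type.
Implicit Types (x y s t : seq T) (c : T).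

Lemma size_shuffle x y : size x = size y -> size (shuffle x y) = (size x).*2.
Proof. by elim: x y => [|a x IH] [|b y] //= [/IH ->]. Qed.

Lemma shuffle_cat x y s t : size x = size s ->
  shuffle (x ++ y) (s ++ t) = shuffle x s ++ shuffle y t.
Proof. by elim: x s => [|a x IH] [|b s] //= [/IH ->]. Qed.

Lemma rev_shuffle x y : size x = size y -> rev (shuffle x y) = shuffle (rev y) (rev x).
Proof.
elim: x y => [|a x IH] [|b y] //= [Exy].
by rewrite !rev_cons IH // -!cats1 -catA shuffle_cat ?size_rev.
Qed.

Lemma shuffle_rev_palindrome x : rev (shuffle x (rev x)) = shuffle x (rev x).
Proof. by rewrite rev_shuffle ?size_rev // revK. Qed.

Lemma shuffle_nseq c k : shuffle (nseq k c) (nseq k c) = nseq k.*2 c.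
Proof. by elim: k => [|k /= ->]. Qed.

Lemma shuffle_rev_framed c k x :
  shuffle (nseq k c ++ x ++ nseq k c) (rev (nseq k c ++ x ++ nseq k c))
  = nseq k.*2 c ++ shuffle x (rev x) ++ nseq k.*2 c.
Proof.
rewrite !rev_cat rev_nseq -catA.
by rewrite !shuffle_cat ?size_nseq ?size_rev // shuffle_nseq.
Qed.
End Shuffle.

(* Fooling sets: if u_i v_j is in L exactly when i = j, no DFA accepts L, since
   two of the prefixes u_0, ..., u_N (N = number of states) reach the same state. *)
Lemma fooling_set_not_regular (A : finType) (L : language A) (u v : nat -> seq A) :
  (forall i, L (u i ++ v i)) -> (forall i j, L (u i ++ v j) -> i = j) -> ~ regular L.
Proof.
move=> Lii Lij [M HM].
pose after (i : 'I_(#|dfa_state M|).+1) := foldl (@dfa_trans _ M) (dfa_start M) (u i).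
have [i [j [neq_ij Eij]]] : exists i j, i != j /\ after i = after j.
  have /injectivePn [i [j ? ?]] : ~~ injectiveb after.
    apply/negP => /injectiveP /leq_card; by rewrite card_ord ltnn.
  by exists i, j.
have : L (u i ++ v j).
  by apply/HM; rewrite /dfa_accept foldl_cat -/(after i) Eij -foldl_cat; apply/HM.
by move/Lij/val_inj/eqP; rewrite (negbTE neq_ij).
Qed.

Section TableDfa.
Variables (A : finType) (n : nat) (step : nat -> A -> nat) (start : nat) (final : pred nat).
Hypothesis step_bounded : forall s a, step s a <= n.
Hypothesis start_bounded : start <= n.

Definition table_step (s : 'I_n.+1) (a : A) : 'I_n.+1 := inord (step s a).

Definition table_dfa : dfa A := @DFA A 'I_n.+1 (inord start) (fun s => final s) table_step.

Lemma table_dfa_run (s : 'I_n.+1) w :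
  foldl table_step s w = foldl step s w :> nat.
Proof. by elim: w s => [|a w IH] s //=; rewrite IH /table_step inordK // ltnS. Qed.

Lemma table_dfa_accept w : dfa_accept table_dfa w = final (foldl step start w).
Proof. by rewrite /dfa_accept /= table_dfa_run inordK // ltnS. Qed.
End TableDfa.

Lemma nseq_false_true_inj p q (s t : seq bool) :
  nseq p false ++ true :: s = nseq q false ++ true :: t -> p = q /\ s = t.
Proof.
elim: p q => [|p IH] [|q] //=; first by case.
by case=> /IH [-> ->].
Qed.

Definition twin_ones (p q : nat) : seq bool :=
  nseq p false ++ true :: true :: nseq q false.

Lemma size_twin_ones p q : size (twin_ones p q) = p + q + 2.
Proof. by rewrite size_cat /= !size_nseq; lia. Qed.

Lemma twin_ones_palindrome p q : rev (twin_ones p q) = twin_ones p q -> p = q.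
Proof.
rewrite /twin_ones rev_cat /= rev_cons rev_cons !rev_nseq -!cats1 -!catA /=.
by move=> /nseq_false_true_inj [->].
Qed.

(* Palindromicity forces p = q and comparing lengths gives p = a + b >= 2. *)
Lemma pssr_L0_to_twin w : pssr L0 w -> L011 w -> exists n, 2 <= n /\ w = twin_ones n n.
Proof.
move=> [x [[a [b [a0 [b0 ->]]]] ->]] [p [q [p0 [q0 Ew]]]].
have := shuffle_rev_palindrome (nseq a false ++ true :: nseq b false).
rewrite Ew -/(twin_ones p q) => /twin_ones_palindrome Epq; subst q.
have := congr1 size Ew; rewrite size_shuffle ?size_rev // -/(twin_ones p p).
rewrite size_twin_ones size_cat /= !size_nseq => Esize.
by exists p; split; first lia.
Qed.

(* 0^n 1 1 0^n is the shuffle of 0^k (0^e 1) 0^k with n = 2k + e, e = odd n. *)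
Lemma twin_to_pssr_L0 n : 2 <= n -> pssr L0 (twin_ones n n).
Proof.
move=> n2; set k := n./2.
pose u := nseq (odd n) false ++ [:: true].
have Eshu : shuffle u (rev u) = nseq (odd n) false ++ true :: true :: nseq (odd n) false.
  by rewrite /u; case: (odd n).
have En : n = k.*2 + odd n by rewrite addnC odd_double_half.
exists (nseq k false ++ u ++ nseq k false); split.
  by rewrite /u -catA catA -nseqD; exists (k + odd n), k; do !split; rewrite /k; lia.
by rewrite shuffle_rev_framed Eshu /twin_ones -catA catA -nseqD /= -nseqD -En addnC -En.
Qed.

Lemma pssr_L0_cap_L011 w : (pssr L0 w /\ L011 w) <-> exists n, 2 <= n /\ w = twin_ones n n.
Proof.
split=> [[] | [n [n2 ->]]]; first exact: pssr_L0_to_twin.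
by split; [exact: twin_to_pssr_L0 | exists n, n; rewrite !(leq_trans _ n2)].
Qed.

(* The automaton for L0: 0 start, 1 reading leading 0s, 2 just read the 1,
   3 reading trailing 0s (accepting), 4 sink. *)
Definition L0_step (s : nat) (b : bool) : nat :=
  match s, b with
  | 0, false | 1, false => 1
  | 1, true => 2
  | 2, false | 3, false => 3
  | _, _ => 4
  end.

Lemma L0_step_bounded s b : L0_step s b <= 4.
Proof. by case: s => [|[|[|[|s]]]]; case: b. Qed.

Lemma L0_run_sink w : foldl L0_step 4 w = 4.
Proof. by elim: w => [|[] w IH]. Qed.

Lemma L0_run_trailing w : foldl L0_step 3 w = 3 <-> w = nseq (size w) false.
Proof.
elim: w => [|[] w IH] //=; first by rewrite L0_run_sink.
by rewrite IH; split => [->|[]]; rewrite ?size_nseq.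
Qed.

Lemma L0_run_after_one w :
  foldl L0_step 2 w = 3 <-> exists2 n, 0 < n & w = nseq n false.
Proof.
case: w => [|[] w] /=; last rewrite L0_run_trailing.
- by split=> // -[[|n]].
- by rewrite L0_run_sink; split=> // -[[|n]].
- by split=> [->|[[|n] // _ [->]]]; [exists (size w).+1 | rewrite size_nseq].
Qed.

Lemma L0_run_leading w :
  foldl L0_step 1 w = 3 <-> exists m n, 0 < n /\ w = nseq m false ++ true :: nseq n false.
Proof.
elim: w => [|[] w IH] /=.
- by split=> // -[[|m] [n []]].
- rewrite L0_run_after_one; split=> [[n n0 ->]|[[|m] [n [n0 []]]]] //.
    by exists 0, n.
  by exists n.
- rewrite IH; split=> [[m [n [n0 ->]]]|[[|m] [n [n0 []]]]] //.
    by exists m.+1, n.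
  by exists m, n.
Qed.

Lemma L0_run_start w : foldl L0_step 0 w = 3 <-> L0 w.
Proof.
case: w => [|[] w] /=; last rewrite L0_run_leading.
- by split=> // -[[|m] [n [? []]]].
- by rewrite L0_run_sink; split=> // -[[|m] [n [? []]]].
- split=> [[m [n [n0 ->]]]|[[|m] [n [_ [n0 []]]]]] //.
    by exists m.+1, n.
  by exists m, n.
Qed.

Lemma L0_regular : regular L0.
Proof.
exists (@table_dfa bool 4 L0_step 0 (pred1 3)) => w.
rewrite table_dfa_accept //=; last exact: L0_step_bounded.
by rewrite -L0_run_start; split=> [->|/eqP].
Qed.

Lemma pssr_L0_not_regular : ~ regular (pssr L0).
Proof.
pose u i := nseq i.+2 false; pose v j := true :: true :: nseq j.+2 false.
apply: (@fooling_set_not_regular _ _ u v) => [i | i j Lij].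
  exact: (@twin_to_pssr_L0 i.+2).
have [|n [_]] := iffLR (pssr_L0_cap_L011 (twin_ones i.+2 j.+2)).
  by split=> //; exists i.+2, j.+2.
move=> /nseq_false_true_inj [Ein /(congr1 size)].
by rewrite /= !size_nseq -Ein => -[].
Qed.

Theorem mainTheorem6 :
  (exists L : language bool, regular L /\ ~ regular (pssr L)) /\
  (regular L0 /\ ~ regular (pssr L0) /\
   forall w, (pssr L0 w /\ L011 w) <->
             exists n, 2 <= n /\ w = nseq n false ++ true :: true :: nseq n false).
Proof.
split; first by exists L0; split; [exact: L0_regular | exact: pssr_L0_not_regular].
split; first exact: L0_regular.
split; first exact: pssr_L0_not_regular.
exact: pssr_L0_cap_L011.
Qed.
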